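(* Let $C=C_{9,1}$ be the Clifford system of rank $10$ on $\mathbb{R}^{32}$. Then the Clifford foliation $(\mathbb{S}^{31},\mathcal{F}_C)$ is not homogeneous.
   Context: A Clifford system $C$ of rank $m+1$ on $\mathbb{R}^{2l}$, with the standard inner product, is an $(m+1)$-dimensional linear subspace $\mathbb{R}_C$ of the symmetric endomorphisms of $\mathbb{R}^{2l}$. It must admit a basis $P_0,\dots,P_m$ with $P_i^2=\mathrm{Id}$ and $P_iP_j=-P_jP_i$ for $i\ne j$. For $m=9$ and $l=16$ such a system exists and is unique up to conjugation by $O(32)$; it is denoted $C_{9,1}$. The map $\pi_C$ is $\pi_C(x)=\sum_i\langle P_ix,x\rangle P_i$ on $\mathbb{S}^{2l-1}$, and $\mathcal{F}_C$ is the partition into fibers of $\pi_C$. Homogeneous means the leaves are the orbits of an isometric action of a connected Lie group. *)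

(* real linear algebra on R^n with vectors nat -> R and
   matrices nat -> nat -> R; only indices < n are meaningful. *)
From Stdlib Require Import Reals Lra Lia Arith.
Open Scope R_scope.

Definition vec := nat -> R.
Definition mat := nat -> nat -> R.

Fixpoint rsum (n : nat) (f : nat -> R) : R :=
  match n with O => 0 | S k => rsum k f + f k end.

Definition dot (n : nat) (x y : vec) : R := rsum n (fun i => x i * y i).
Definition mv (n : nat) (A : mat) (x : vec) : vec :=
  fun i => rsum n (fun j => A i j * x j).
Definition mm (n : nat) (A B : mat) : mat :=
  fun i k => rsum n (fun j => A i j * B j k).
Definition tr (A : mat) : mat := fun i j => A j i.
Definition idm : mat := fun i j => if Nat.eq_dec i j then 1 else 0.
Definition mopp (A : mat) : mat := fun i j => - A i j.

Definition vec_eq (n : nat) (x y : vec) : Prop :=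
  forall i, (i < n)%nat -> x i = y i.
Definition mat_eq (n : nat) (A B : mat) : Prop :=
  forall i j, (i < n)%nat -> (j < n)%nat -> A i j = B i j.

Definition symmetric (n : nat) (A : mat) : Prop :=
  forall i j, (i < n)%nat -> (j < n)%nat -> A i j = A j i.

Definition sphere (n : nat) (x : vec) : Prop := dot n x x = 1.

(* A Clifford system of rank m+1 on R^(2l), given by a basis P_0,...,P_m of
   symmetric endomorphisms with P_i^2 = Id and P_i P_j = - P_j P_i (i <> j). *)
Definition clifford_system (m l : nat) (P : nat -> mat) : Prop :=
  (forall i, (i <= m)%nat -> symmetric (2 * l) (P i)) /\
  (forall i, (i <= m)%nat -> mat_eq (2 * l) (mm (2 * l) (P i) (P i)) idm) /\
  (forall i j, (i <= m)%nat -> (j <= m)%nat -> i <> j ->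
     mat_eq (2 * l) (mm (2 * l) (P i) (P j)) (mopp (mm (2 * l) (P j) (P i)))).

Definition piC (m n : nat) (P : nat -> mat) (x : vec) : mat :=
  fun a b => rsum (S m) (fun i => dot n (mv n (P i) x) x * P i a b).

Definition same_leaf (m n : nat) (P : nat -> mat) (x y : vec) : Prop :=
  mat_eq n (piC m n P x) (piC m n P y).

Definition orthogonal (n : nat) (A : mat) : Prop :=
  mat_eq n (mm n (tr A) A) idm.

Definition orth_subgroup (n : nat) (G : mat -> Prop) : Prop :=
  (forall A, G A -> orthogonal n A) /\
  G idm /\
  (forall A B, G A -> G B -> G (mm n A B)) /\
  (forall A, G A -> G (tr A)).

Definition path_connected (n : nat) (G : mat -> Prop) : Prop :=
  forall A B, G A -> G B ->
    exists gamma : R -> mat,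
      (forall t, 0 <= t <= 1 -> G (gamma t)) /\
      mat_eq n (gamma 0) A /\ mat_eq n (gamma 1) B /\
      (forall i j, (i < n)%nat -> (j < n)%nat -> continuity (fun t => gamma t i j)).

(* The foliation (S^{2l-1}, F_C) is homogeneous: its leaves are the orbits of
   an isometric action of a connected Lie group, i.e. (image in Isom(S^{2l-1})
   = O(2l)) of a path-connected subgroup G of O(2l). *)
Definition homogeneous_clifford (m l : nat) (P : nat -> mat) : Prop :=
  exists G : mat -> Prop,
    orth_subgroup (2 * l) G /\ path_connected (2 * l) G /\
    forall x y, sphere (2 * l) x -> sphere (2 * l) y ->
      (same_leaf m (2 * l) P x y <->
       exists g, G g /\ vec_eq (2 * l) (mv (2 * l) g x) y).

(* The products [P_S] of the generators over the subsets [S] of {0, ..., 9} are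
   orthogonal for the trace form: when [S <> T] some [P_i] conjugates [P_S] and
   [P_T] with opposite signs.  Since 2^10 = 32^2 they form a basis of the 32x32
   matrices, so a matrix commuting with every [P_i] is scalar.  The quadratic
   forms [<P_i x, x>] are the coordinates of [pi_C], so an isometry mapping every
   leaf to itself satisfies [g^T P_i g = P_i], i.e. commutes with the [P_i]; thus
   [g = +-1], and [g = 1] on a connected group.  But [x] and [-x] always lie in
   the same leaf. *)

From Stdlib Require Import Reals Lra.
Set Warnings "-notation-overridden,-ambiguous-paths,-masking-absolute-name".
From mathcomp Require Import all_boot all_order all_algebra.
From mathcomp Require Import Rstruct.
Set Implicit Arguments. Unset Strict Implicit. Unset Printing Implicit Defensive.
Import GRing.Theory Num.Theory.
Local Open Scope ring_scope.

Lemma count_predC1_enum (T : finType) (S : {set T}) i :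
  count (predC1 i) (enum S) = #|S :\ i|.
Proof.
rewrite -(addKn (i \in S) #|S :\ i|) -cardsD1 cardE.
by rewrite -(count_predC (pred1 i)) (count_uniq_mem _ (enum_uniq _)) mem_enum addKn.
Qed.

Lemma sqr_eq_exp2_even n p : (n * n = 2 ^ p)%N -> ~~ odd p.
Proof.
move=> e; have /andP[n_gt0 _] : (0 < n)%N && (0 < n)%N by rewrite -muln_gt0 e expn_gt0.
by rewrite -(pfactorK p (isT : prime 2)) -e lognM // addnn odd_double.
Qed.

(* The parities of the [#|S :\ i|] determine [S] up to complement, and for even
   [p] complementing [S] flips all of them. *)
Lemma setD1_parity_separates p (S T : {set 'I_p}) : ~~ odd p -> S != T ->
  exists i, odd #|S :\ i| != odd #|T :\ i|.
Proof.
move=> p_even neST; apply/existsP; apply: contraR neST.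
rewrite negb_exists => /forallP same.
have memST i : (i \in S) (+) (i \in T) = odd #|S| (+) odd #|T|.
  move: (same i); rewrite negbK (cardsD1 i S) (cardsD1 i T) !oddD => /eqP.
  by case: (i \in S); case: (i \in T); case: (odd _); case: (odd _).
have [oddST | oddST] := eqVneq (odd #|S|) (odd #|T|).
  apply/eqP/setP => i; move: (memST i); rewrite oddST addbb.
  by case: (i \in S); case: (i \in T).
have S_compl : S = ~: T.
  apply/setP => i; rewrite inE; move: (memST i) oddST.
  by case: (odd #|S|); case: (odd #|T|); case: (i \in S); case: (i \in T).
have := congr1 odd (cardsC T); rewrite card_ord -S_compl (negbTE p_even) oddD.
by move: oddST; case: (odd _); case: (odd _).
Qed.

Lemma trace_conj_opposite_signs (K : realFieldType) n (c X Y : 'M[K]_n) a b :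
  c^T = c -> c *m c = 1%:M -> c *m X *m c = a *: X -> c *m Y *m c = b *: Y ->
  a * b = -1 -> \tr (X^T *m Y) = 0.
Proof.
move=> c_sym c_inv cX cY ab.
have : \tr ((c *m X *m c)^T *m (c *m Y *m c)) = \tr (X^T *m Y).
  rewrite !trmx_mul c_sym -!mulmxA (mulmxA c c) c_inv mul1mx.
  by rewrite mxtrace_mulC -!mulmxA c_inv mulmx1.
rewrite cX cY [(a *: X)^T]linearZ /= -scalemxAl -scalemxAr !mxtraceZ.
rewrite mulrA ab mulN1r => /eqP.
by rewrite eq_sym -subr_eq0 opprK -mulr2n mulrn_eq0 => /eqP.
Qed.

Lemma mxvec_dot (K : pzRingType) m n (A B : 'M[K]_(m, n)) :
  \sum_q mxvec A 0 q * mxvec B 0 q = \tr (A^T *m B).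
Proof.
rewrite (reindex _ (curry_mxvec_bij _ _)) /= /mxtrace.
under [RHS]eq_bigr do rewrite mxE.
rewrite exchange_big pair_bigA /=; apply: eq_bigr => -[i j] _.
by rewrite /= !mxvecE mxE.
Qed.

Lemma mulmx_tr_scalarC (K : fieldType) n (A : 'M[K]_n) c : c != 0 ->
  A *m A^T = c%:M -> A^T *m A = c%:M.
Proof.
move=> c_neq0 AAt; have : (c^-1 *: A) *m A^T = 1%:M.
  by rewrite -scalemxAl AAt -mul_scalar_mx -scalar_mxM mulVf.
move/mulmx1C; rewrite -scalemxAr => /(congr1 (fun X => c *: X)).
by rewrite scalerA mulfV // scale1r => ->; rewrite scalemx1.
Qed.

Lemma sign_parity_opposite (K : numDomainType) (s t : nat) : odd s != odd t ->
  (-1 : K) ^+ s * (-1) ^+ t = -1.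
Proof. by rewrite -exprD -signr_odd oddD; case: (odd s); case: (odd t). Qed.

Section CliffordSystem.
Variables (K : realFieldType) (p n : nat) (P : 'I_p -> 'M[K]_n).
Hypothesis P_sym : forall i, (P i)^T = P i.
Hypothesis P_sqr : forall i, P i *m P i = 1%:M.
Hypothesis P_anti : forall i j, i != j -> P i *m P j = - (P j *m P i).

Lemma conj_gen (i j : 'I_p) : P i *m P j *m P i = (-1) ^+ (j != i) *: P j.
Proof.
have [->|ne] := eqVneq j i; first by rewrite -mulmxA P_sqr mulmx1 scale1r.
by rewrite P_anti 1?eq_sym // mulNmx -mulmxA P_sqr mulmx1 scaleN1r.
Qed.

Lemma trace_gen_mul i j : \tr (P i *m P j) = if i == j then n%:R else 0.
Proof.
have [<-|ne] := eqVneq i j; first by rewrite P_sqr mxtrace1.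
rewrite -{1}P_sym.
apply: (trace_conj_opposite_signs (P_sym i) (P_sqr i) (conj_gen i i) (conj_gen i j)).
by rewrite eqxx eq_sym ne mul1r expr1.
Qed.

Lemma gen_lin_indep (a b : 'I_p -> K) : (0 < n)%N ->
  \sum_i a i *: P i = \sum_i b i *: P i -> a =1 b.
Proof.
move=> n_gt0 eq_ab j.
have coef c : \tr ((\sum_i c i *: P i) *m P j) = c j * n%:R.
  rewrite mulmx_suml raddf_sum (bigD1 j) //= big1 ?addr0 => [|i ne].
    by rewrite -scalemxAl mxtraceZ trace_gen_mul eqxx.
  by rewrite -scalemxAl mxtraceZ trace_gen_mul (negbTE ne) mulr0.
have n_neq0 : (n%:R : K) != 0 by rewrite pnatr_eq0 -lt0n.
by apply: (mulIf n_neq0); rewrite -!coef eq_ab.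
Qed.

Definition gen_prod (r : seq 'I_p) : 'M[K]_n := \big[mulmx/1%:M]_(j <- r) P j.

Lemma gen_prod_orthogonal r : (gen_prod r)^T *m gen_prod r = 1%:M.
Proof.
rewrite /gen_prod; elim: r => [|j r IH]; first by rewrite big_nil trmx1 mulmx1.
by rewrite big_cons trmx_mul P_sym -mulmxA (mulmxA (P j)) P_sqr mul1mx.
Qed.

Lemma conj_gen_prod i r :
  P i *m gen_prod r *m P i = (-1) ^+ count (predC1 i) r *: gen_prod r.
Proof.
rewrite /gen_prod; elim: r => [|j r IH]; first by rewrite big_nil mulmx1 P_sqr scale1r.
set Q := \big[_/_]_(_ <- r) _ in IH *; rewrite big_cons /=.
have -> : P i *m (P j *m Q) *m P i = (P i *m P j *m P i) *m (P i *m Q *m P i).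
  by rewrite !mulmxA -(mulmxA _ (P i) (P i)) P_sqr mulmx1.
by rewrite conj_gen IH -scalemxAl -scalemxAr scalerA -exprD.
Qed.

Definition cliff_prod (S : {set 'I_p}) : 'M[K]_n := gen_prod (enum S).

Lemma cliff_prod0 : cliff_prod set0 = 1%:M.
Proof. by rewrite /cliff_prod enum_set0 /gen_prod big_nil. Qed.

Lemma conj_cliff_prod i S :
  P i *m cliff_prod S *m P i = (-1) ^+ #|S :\ i| *: cliff_prod S.
Proof. by rewrite conj_gen_prod count_predC1_enum. Qed.

Section IrreducibleDimension.
Hypothesis dim : (n * n = 2 ^ p)%N.

Let p_even : ~~ odd p := sqr_eq_exp2_even dim.

Lemma trace_cliff_prod S T :
  \tr ((cliff_prod S)^T *m cliff_prod T) = if S == T then n%:R else 0.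
Proof.
have [<-|neST] := eqVneq S T; first by rewrite gen_prod_orthogonal mxtrace1.
have [i odd_i] := setD1_parity_separates p_even neST.
exact: (trace_conj_opposite_signs (P_sym i) (P_sqr i) (conj_cliff_prod i S)
  (conj_cliff_prod i T) (sign_parity_opposite K odd_i)).
Qed.

Lemma trace_cliff_prod_commute (g : 'M[K]_n) S : (forall i, P i *m g = g *m P i) ->
  S != set0 -> \tr ((cliff_prod S)^T *m g) = 0.
Proof.
move=> gP S_neq0; have [i odd_i] := setD1_parity_separates p_even S_neq0.
rewrite set0D cards0 in odd_i.
apply: (trace_conj_opposite_signs (P_sym i) (P_sqr i) (conj_cliff_prod i S) (b := 1)).
  by rewrite gP -mulmxA P_sqr mulmx1 scale1r.
by rewrite -(expr0 (-1 : K)) sign_parity_opposite.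
Qed.

Lemma card_set_sqr : (n * n = #|{set 'I_p}|)%N.
Proof.
have := card_powerset [set: 'I_p]; rewrite cardsT card_ord dim => <-.
by apply: eq_card => S; rewrite powersetE subsetT inE.
Qed.

Definition set_index (k : 'I_(n * n)) : {set 'I_p} := enum_val (cast_ord card_set_sqr k).

Lemma set_index_inj : injective set_index.
Proof. by move=> k l /enum_val_inj/cast_ord_inj. Qed.

Definition set0_index : 'I_(n * n) := cast_ord (esym card_set_sqr) (enum_rank set0).

Lemma set_index0 : set_index set0_index = set0.
Proof. by rewrite /set_index /set0_index cast_ordKV enum_rankK. Qed.

Definition cliff_mx : 'M[K]_(n * n) :=
  \matrix_(k, q) mxvec (cliff_prod (set_index k)) 0 q.

Lemma cliff_mx_orthogonal : cliff_mx *m cliff_mx^T = n%:R%:M.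
Proof.
apply/matrixP => k l; rewrite !mxE; under eq_bigr do rewrite !mxE.
by rewrite mxvec_dot trace_cliff_prod (inj_eq set_index_inj); case: (k == l).
Qed.

Theorem commute_cliff_scalar (g : 'M[K]_n) :
  (forall i, P i *m g = g *m P i) -> g = (\tr g / n%:R)%:M.
Proof.
move=> gP; have /andP[n_gt0 _] : (0 < n)%N && (0 < n)%N by rewrite -muln_gt0 dim expn_gt0.
have n_neq0 : (n%:R : K) != 0 by rewrite pnatr_eq0 -lt0n.
have coords : mxvec g *m cliff_mx^T = \tr g *: delta_mx 0 set0_index.
  apply/rowP => k; rewrite !mxE; under eq_bigr do rewrite !mxE.
  under eq_bigr do rewrite mulrC; rewrite mxvec_dot eqxx /=.
  have [->|ne] := eqVneq k set0_index.
    by rewrite set_index0 cliff_prod0 trmx1 mul1mx mulr1.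
  rewrite trace_cliff_prod_commute ?mulr0 //.
  by apply: contra ne => /eqP S0; apply/eqP/set_index_inj; rewrite S0 set_index0.
have row0 : row set0_index cliff_mx = mxvec 1%:M.
  by apply/rowP => q; rewrite !mxE set_index0 cliff_prod0.
have := congr1 (mulmx^~ cliff_mx) coords.
rewrite -mulmxA (mulmx_tr_scalarC n_neq0 cliff_mx_orthogonal) mul_mx_scalar.
rewrite -scalemxAl -rowE row0 -!linearZ => /(can_inj mxvecK) ng.
by apply: (scalerI n_neq0); rewrite ng -[(_ / _)%:M]scalemx1 scalerA mulrC divfK.
Qed.

End IrreducibleDimension.
End CliffordSystem.

Section BilinearForm.
Variables (K : rcfType) (n : nat).

Definition bform (A : 'M[K]_n) (u v : 'cV[K]_n) : K := (u^T *m A *m v) 0 0.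

Lemma bformDl A u1 u2 v : bform A (u1 + u2) v = bform A u1 v + bform A u2 v.
Proof. by rewrite /bform linearD /= !mulmxDl mxE. Qed.

Lemma bformDr A u v1 v2 : bform A u (v1 + v2) = bform A u v1 + bform A u v2.
Proof. by rewrite /bform mulmxDr mxE. Qed.

Lemma bformZl A s u v : bform A (s *: u) v = s * bform A u v.
Proof. by rewrite /bform linearZ /= -!scalemxAl mxE. Qed.

Lemma bformZr A s u v : bform A u (s *: v) = s * bform A u v.
Proof. by rewrite /bform -scalemxAr mxE. Qed.

Lemma bformN A u : bform A (- u) (- u) = bform A u u.
Proof. by rewrite -scaleN1r bformZl bformZr !mulN1r opprK. Qed.

Lemma bformB A B u v : bform (A - B) u v = bform A u v - bform B u v.
Proof. by rewrite /bform mulmxBr mulmxBl !mxE. Qed.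

Lemma bform_mulmx A B u v : bform A (B *m u) (B *m v) = bform (B^T *m A *m B) u v.
Proof. by rewrite /bform trmx_mul !mulmxA. Qed.

Lemma bform_delta A a b : bform A (delta_mx a 0) (delta_mx b 0) = A a b.
Proof. by rewrite /bform trmx_delta -rowE -colE !mxE. Qed.

(* A symmetric form vanishing on unit vectors vanishes: test it on [e_a] and
   on [(e_a + e_b) / sqrt 2]. *)
Lemma sym_mx_eq0_on_sphere (Q : 'M[K]_n) : Q^T = Q ->
  (forall u, bform 1%:M u u = 1 -> bform Q u u = 0) -> Q = 0.
Proof.
move=> Q_sym Q_sphere.
have Qaa a : Q a a = 0.
  by rewrite -bform_delta; apply: Q_sphere; rewrite bform_delta mxE eqxx.
apply/matrixP => a b; rewrite [RHS]mxE.
have [<-|neab] := eqVneq a b; first exact: Qaa.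
pose s : K := Num.sqrt 2^-1.
have ss : s * s = 2^-1 by rewrite -expr2 sqr_sqrtr // invr_ge0 ler0n.
pose u : 'cV[K]_n := s *: (delta_mx a 0 + delta_mx b 0).
have quad A : bform A u u = 2^-1 * (A a a + A a b + A b a + A b b).
  rewrite /u bformZl bformZr mulrA ss !bformDl !bformDr !bform_delta.
  by rewrite !addrA.
have two_neq0 : (2 : K) != 0 by rewrite pnatr_eq0.
have := Q_sphere u; rewrite !quad !mxE (negbTE neab) eq_sym (negbTE neab) !eqxx.
have Qba : Q b a = Q a b by rewrite -{1}Q_sym mxE.
rewrite Qaa (Qaa b) Qba add0r !addr0 -!mulr2n -(mulr_natl (Q a b)) mulKf //.
by apply; rewrite mulVf.
Qed.

End BilinearForm.

Section RealPath.
Local Open Scope R_scope.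

Lemma continuous_sign_path (f : R -> R) : continuity f -> f 0 = 1 ->
  (forall t, 0 <= t <= 1 -> f t * f t = 1) -> f 1 = 1.
Proof.
move=> f_cont f0 f_sign.
have f1_sign : f 1 * f 1 = 1 by apply: f_sign; lra.
case: (Req_dec (f 1) 1) => // f1_neq1.
have f1 : f 1 = -1.
  have : (f 1 - 1) * (f 1 + 1) = 0 by ring_simplify; lra.
  by case/Rmult_integral => ?; [exfalso; apply: f1_neq1 | ]; lra.
have [t [t01 ft0]] := IVT (fun t => - f t) 0 1 (continuity_opp _ f_cont) Rlt_0_1
  ltac:(cbv beta; rewrite f0; lra) ltac:(cbv beta; rewrite f1; lra).
have := f_sign t t01; have -> : f t = 0 by lra.
lra.
Qed.

End RealPath.

Lemma rsumE n (f : nat -> R) : rsum n f = \sum_(i < n) f i.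
Proof. by elim: n => [|n IH]; rewrite ?big_ord0 //= big_ord_recr /= IH. Qed.

Section MatrixOfArray.
Variable n : nat.

Definition to_mx (A : mat) : 'M[R]_n := \matrix_(i, j) A i j.
Definition to_col (x : vec) : 'cV[R]_n := \col_i x i.
Definition of_col (u : 'cV[R]_n) : vec :=
  fun i => if insub i is Some k then u k 0 else 0.

Lemma to_col_of_col u : to_col (of_col u) = u.
Proof.
apply/matrixP => i j; rewrite !mxE /of_col (ord1 j) insubT ?ltn_ord //= => lt_in.
by congr (u _ _); apply: val_inj.
Qed.

Lemma to_mx_mm A B : to_mx (mm n A B) = to_mx A *m to_mx B.
Proof.
by apply/matrixP => i j; rewrite !mxE /mm rsumE; apply: eq_bigr => k _; rewrite !mxE.
Qed.

Lemma to_mx_tr A : to_mx (tr A) = (to_mx A)^T.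
Proof. by apply/matrixP => i j; rewrite !mxE. Qed.

Lemma to_mx_idm : to_mx idm = 1%:M.
Proof.
apply/matrixP => i j; rewrite !mxE /idm.
case: Nat.eq_dec => [/val_inj ->|ne]; first by rewrite eqxx.
by case: eqVneq => // ij; case: ne; rewrite ij.
Qed.

Lemma to_mx_opp A : to_mx (mopp A) = - to_mx A.
Proof. by apply/matrixP => i j; rewrite !mxE. Qed.

Lemma to_col_mv A x : to_col (mv n A x) = to_mx A *m to_col x.
Proof.
by apply/matrixP => i j; rewrite !mxE /mv rsumE; apply: eq_bigr => k _; rewrite !mxE.
Qed.

Lemma dotE x y : dot n x y = ((to_col x)^T *m to_col y) 0 0.
Proof. by rewrite /dot rsumE mxE; apply: eq_bigr => k _; rewrite !mxE. Qed.

Lemma dot_bform x y : dot n x y = bform 1%:M (to_col x) (to_col y).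
Proof. by rewrite dotE /bform mulmx1. Qed.

Lemma dot_mv A x : dot n (mv n A x) x = bform (to_mx A)^T (to_col x) (to_col x).
Proof. by rewrite dotE to_col_mv /bform trmx_mul. Qed.

Lemma mat_eqE A B : mat_eq n A B <-> to_mx A = to_mx B.
Proof.
split=> [eqAB|/matrixP eqAB i j /ssrnat.ltP lt_in /ssrnat.ltP lt_jn].
  by apply/matrixP => i j; rewrite !mxE; apply: eqAB; apply/ssrnat.ltP.
by have := eqAB (Ordinal lt_in) (Ordinal lt_jn); rewrite !mxE.
Qed.

Lemma vec_eqE x y : vec_eq n x y <-> to_col x = to_col y.
Proof.
split=> [eqxy|/matrixP eqxy i /ssrnat.ltP lt_in].
  by apply/matrixP => i j; rewrite !mxE; apply: eqxy; apply/ssrnat.ltP.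
by have := eqxy (Ordinal lt_in) 0; rewrite !mxE.
Qed.

Lemma to_mx_piC m (P : nat -> mat) x :
  to_mx (piC m n P x) = \sum_(i < m.+1) dot n (mv n (P i) x) x *: to_mx (P i).
Proof.
apply/matrixP => a b; rewrite !mxE /piC rsumE summxE.
by apply: eq_bigr => k _; rewrite !mxE.
Qed.

End MatrixOfArray.

Section CliffordFoliation.
Variables (m l : nat) (P : nat -> mat).
Local Notation n := (2 * l)%coq_nat.
Hypothesis P_cliff : clifford_system m l P.
Hypothesis dim : (n * n = 2 ^ m.+1)%N.

Let n_gt0 : (0 < n)%N.
Proof. by have /andP[] : (0 < n)%N && (0 < n)%N by rewrite -muln_gt0 dim expn_gt0. Qed.

Definition gen_mx (i : 'I_m.+1) : 'M[R]_n := to_mx n (P i).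

Let ord_le (i : 'I_m.+1) : (i <= m)%coq_nat.
Proof. by apply/ssrnat.leP; rewrite -ltnS. Qed.

Lemma gen_mx_sym i : (gen_mx i)^T = gen_mx i.
Proof.
case: P_cliff => P_sym _; apply/matrixP => a b; rewrite !mxE.
by apply: (P_sym _ (ord_le i)); apply/ssrnat.ltP.
Qed.

Lemma gen_mx_sqr i : gen_mx i *m gen_mx i = 1%:M.
Proof.
case: P_cliff => _ [P_sqr _]; move/mat_eqE: (P_sqr i (ord_le i)).
by rewrite to_mx_mm to_mx_idm.
Qed.

Lemma gen_mx_anti i j : i != j -> gen_mx i *m gen_mx j = - (gen_mx j *m gen_mx i).
Proof.
case: P_cliff => _ [_ P_anti] neij.
have /mat_eqE : mat_eq n (mm n (P i) (P j)) (mopp (mm n (P j) (P i))).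
  by apply: P_anti (ord_le i) (ord_le j) _ => /val_inj/eqP; apply/negP.
by rewrite to_mx_opp !to_mx_mm.
Qed.

Lemma same_leaf_coef x y : same_leaf m n P x y ->
  forall i : 'I_m.+1, dot n (mv n (P i) x) x = dot n (mv n (P i) y) y.
Proof.
move/mat_eqE; rewrite !to_mx_piC => eq_xy i.
exact: (gen_lin_indep gen_mx_sym gen_mx_sqr gen_mx_anti n_gt0 eq_xy).
Qed.

Section Orbits.
Variable G : mat -> Prop.
Hypothesis G_subgroup : orth_subgroup n G.
Hypothesis G_connected : path_connected n G.
Hypothesis G_leaves : forall x y, sphere n x -> sphere n y ->
  (same_leaf m n P x y <-> exists g, G g /\ vec_eq n (mv n g x) y).

Lemma orbit_orthogonal g : G g -> (to_mx n g)^T *m to_mx n g = 1%:M.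
Proof.
case: G_subgroup => G_orth _ Gg; move/mat_eqE: (G_orth g Gg).
by rewrite to_mx_mm to_mx_tr to_mx_idm.
Qed.

Lemma orbit_commute g i : G g -> gen_mx i *m to_mx n g = to_mx n g *m gen_mx i.
Proof.
move=> Gg; set h := to_mx n g; have h_orth := orbit_orthogonal Gg.
have conj_h : gen_mx i - h^T *m gen_mx i *m h = 0.
  apply: sym_mx_eq0_on_sphere => [|u u_unit].
    by rewrite linearB /= !trmx_mul trmxK gen_mx_sym mulmxA.
  pose x := of_col u; pose y := mv n g x.
  have x_unit : sphere n x by rewrite /sphere dot_bform to_col_of_col.
  have y_unit : sphere n y.
    by rewrite /sphere dot_bform to_col_mv to_col_of_col bform_mulmx mulmx1 h_orth.
  have leaf_xy : same_leaf m n P x y by apply/(G_leaves x_unit y_unit); exists g.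
  have := same_leaf_coef leaf_xy i; rewrite !dot_mv to_col_mv to_col_of_col.
  rewrite bform_mulmx -[to_mx n (P i)]/(gen_mx i) gen_mx_sym bformB => ->.
  by rewrite subrr.
move/eqP: conj_h; rewrite subr_eq0 => /eqP {2}->.
by rewrite !mulmxA (mulmx1C h_orth) mul1mx.
Qed.

Lemma orbit_scalar g : G g -> to_mx n g = (g 0%N 0%N)%:M.
Proof.
move=> Gg; have g_scalar := commute_cliff_scalar gen_mx_sym gen_mx_sqr gen_mx_anti dim
  (fun i => orbit_commute i Gg).
have := congr1 (fun A : 'M_n => A (Ordinal n_gt0) (Ordinal n_gt0)) g_scalar.
rewrite !mxE eqxx mulr1n /= => g00.
by rewrite {1}g_scalar g00.
Qed.

Lemma orbit_sign g : G g -> g 0%N 0%N * g 0%N 0%N = 1.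
Proof.
move=> Gg; have := orbit_orthogonal Gg.
rewrite orbit_scalar // tr_scalar_mx -scalar_mxM.
move/(congr1 (fun A : 'M_n => A (Ordinal n_gt0) (Ordinal n_gt0))).
by rewrite !mxE eqxx !mulr1n.
Qed.

Lemma orbit_trivial g : G g -> to_mx n g = 1%:M.
Proof.
case: G_subgroup => _ [G_id _] Gg.
have [gamma [gamma_G [gamma0 [gamma1 gamma_cont]]]] := G_connected G_id Gg.
have lt0n : (0 < n)%coq_nat by apply/ssrnat.ltP.
have f0 : gamma 0%R 0%N 0%N = 1 by rewrite gamma0 // /idm; case: Nat.eq_dec.
have := continuous_sign_path (gamma_cont _ _ lt0n lt0n) f0
  (fun t t01 => orbit_sign (gamma_G t t01)).
by rewrite orbit_scalar // gamma1 // => ->.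
Qed.

End Orbits.

Theorem clifford_foliation_not_homogeneous : ~ homogeneous_clifford m l P.
Proof.
case=> G [G_subgroup [G_connected G_leaves]].
pose i0 := Ordinal n_gt0; pose u : 'cV[R]_n := delta_mx i0 0.
have u_unit : bform 1%:M u u = 1 by rewrite bform_delta mxE eqxx.
have x_unit : sphere n (of_col u) by rewrite /sphere dot_bform to_col_of_col.
have y_unit : sphere n (of_col (- u)) by rewrite /sphere dot_bform to_col_of_col bformN.
have leaf_xy : same_leaf m n P (of_col u) (of_col (- u)).
  apply/mat_eqE; rewrite !to_mx_piC; apply: eq_bigr => i _.
  by rewrite !dot_mv !to_col_of_col bformN.
have [g [Gg /vec_eqE]] := (G_leaves _ _ x_unit y_unit).1 leaf_xy.
have g_id := orbit_trivial G_subgroup G_connected G_leaves Gg.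
rewrite to_col_mv !to_col_of_col g_id mul1mx.
move/(congr1 (fun v : 'cV_n => v i0 0)); rewrite !mxE eqxx /= => /eqP.
by rewrite -subr_eq0 opprK -mulr2n pnatr_eq0.
Qed.

End CliffordFoliation.

Theorem proposition5p3 :
  forall P : nat -> mat, clifford_system 9 16 P -> ~ homogeneous_clifford 9 16 P.
Proof.
move=> P P_cliff.
exact: (clifford_foliation_not_homogeneous P_cliff (erefl (2 ^ 10)%N)).
Qed.
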